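(* If $D$ is a weakly locally finite division ring, then the center $Z(D')$ of the derived subgroup $D'=[D^*,D^*]$ of $D^*$ is a torsion group.
   Context: A division ring is weakly locally finite if the division subring generated by any finite subset is finite dimensional over its own center. *)

From mathcomp Require Import all_boot all_order all_algebra.
Set Implicit Arguments. Unset Strict Implicit. Unset Printing Implicit Defensive.
Import GRing.Theory.
Local Open Scope ring_scope.

Definition is_division_ring (D : unitRingType) : Prop :=
  forall x : D, x != 0 -> x \is a GRing.unit.

Inductive divsub (D : unitRingType) (S : seq D) : D -> Prop :=
  | divsub_mem x : x \in S -> divsub S x
  | divsub_one : divsub S 1
  | divsub_sub a b : divsub S a -> divsub S b -> divsub S (a - b)
  | divsub_mul a b : divsub S a -> divsub S b -> divsub S (a * b)
  | divsub_inv a : divsub S a -> divsub S a^-1.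

Definition divsub_center (D : unitRingType) (S : seq D) (x : D) : Prop :=
  divsub S x /\ forall y, divsub S y -> x * y = y * x.

(* The division subring generated by S is finite dimensional (as a left
   vector space) over its own center: it has a finite spanning family. *)
Definition divsub_findim (D : unitRingType) (S : seq D) : Prop :=
  exists B : seq D, (forall b, b \in B -> divsub S b) /\
    forall x, divsub S x ->
      exists c : 'I_(size B) -> D, (forall i, divsub_center S (c i)) /\
        x = \sum_(i < size B) c i * B`_i.

Definition weakly_locally_finite (D : unitRingType) : Prop :=
  forall S : seq D, divsub_findim S.

Inductive derived (D : unitRingType) : D -> Prop :=
  | derived_comm x y : x != 0 -> y != 0 -> derived (x * y * x^-1 * y^-1)
  | derived_mul a b : derived a -> derived b -> derived (a * b)
  | derived_inv a : derived a -> derived a^-1.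

Definition derived_center (D : unitRingType) (x : D) : Prop :=
  derived x /\ forall y, derived y -> x * y = y * x.

(* An element x of Z(D') commutes with each conjugate y x y^-1 = (y x y^-1 x^-1) x,
   and in a division ring this forces x to be central: comparing the conjugates
   of x by b and by 1 + b shows that x commutes with b.
   Let K be the division subring generated by the finitely many elements from
   which x is built as a product of commutators. K has a finite basis over its
   center F, and left multiplication is a multiplicative map K -> M_m(F); its
   determinant is 1 on commutators, hence on x, while the central element x acts
   as the scalar matrix x, so x^m = 1. *)

From HB Require Import structures.
From mathcomp Require Import all_boot all_order all_algebra.
From mathcomp Require Import boolp.
Set Implicit Arguments. Unset Strict Implicit. Unset Printing Implicit Defensive.
Import GRing.Theory.
Local Open Scope ring_scope.

Section DivisionSubring.
Variables (D : unitRingType) (S : seq D).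

Definition dcenter : {pred D} := fun y => `[< divsub_center S y >].

Lemma dcenterP y : reflect (divsub_center S y) (y \in dcenter).
Proof. exact: asboolP. Qed.

Lemma dcenter_divring_closed : divring_closed dcenter.
Proof.
split.
- by apply/dcenterP; split=> [|y _]; [apply: divsub_one | rewrite mul1r mulr1].
- move=> a c /dcenterP[ha ca] /dcenterP[hc cc]; apply/dcenterP.
  by split=> [|y hy]; [apply: divsub_sub | rewrite mulrBl mulrBr ca // cc].
move=> a c /dcenterP[ha ca] /dcenterP[hc cc]; apply/dcenterP.
split=> [|y hy]; first by apply: divsub_mul => //; apply: divsub_inv.
have cVc : c^-1 * y = y * c^-1.
  have [uc|/invr_out->] := boolP (c \is a GRing.unit); last exact: cc.
  by apply: (mulrI uc); rewrite mulrA mulrV // mul1r mulrA cc // mulrK.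
by rewrite -mulrA cVc mulrA ca // mulrA.
Qed.

End DivisionSubring.

HB.instance Definition _ (D : unitRingType) (S : seq D) :=
  GRing.isDivringClosed.Build D (dcenter S) (dcenter_divring_closed S).

Record dcenter_elt (D : unitRingType) (S : seq D) :=
  DcenterElt { dcval :> D; dcvalP : dcval \in dcenter S }.

HB.instance Definition _ (D : unitRingType) (S : seq D) :=
  [isSub for @dcval D S].
HB.instance Definition _ (D : unitRingType) (S : seq D) :=
  [Choice of dcenter_elt S by <:].
HB.instance Definition _ (D : unitRingType) (S : seq D) :=
  [SubChoice_isSubNzRing of dcenter_elt S by <:].

Lemma dcenter_mulC (D : unitRingType) (S : seq D) :
  commutative (@GRing.mul (dcenter_elt S)).
Proof.
move=> [a ha] [c hc]; apply: val_inj => /=.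
by case/dcenterP: ha => _ ca; case/dcenterP: hc => hc _; apply: ca.
Qed.

HB.instance Definition _ (D : unitRingType) (S : seq D) :=
  GRing.PzRing_hasCommutativeMul.Build (dcenter_elt S) (@dcenter_mulC D S).

Definition cspanning (D : unitRingType) (S : seq D) m (b : 'I_m -> D) :=
  (forall i, divsub S (b i)) /\ forall y, divsub S y ->
  exists2 c : 'I_m -> D, (forall i, c i \in dcenter S) & y = \sum_i c i * b i.

Definition cfree (D : unitRingType) (S : seq D) m (b : 'I_m -> D) :=
  forall c : 'I_m -> D, (forall i, c i \in dcenter S) ->
  \sum_i c i * b i = 0 -> forall i, c i = 0.

Section CenterBasis.
Variables (D : unitRingType) (S : seq D).
Hypothesis divD : is_division_ring D.

Lemma cspanning_drop m (b : 'I_m.+1 -> D) c k :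
  cspanning S b -> (forall i, c i \in dcenter S) -> \sum_i c i * b i = 0 ->
  c k != 0 -> cspanning S (fun i => b (lift k i)).
Proof.
move=> [bS spb] cS sum0 ck0; have uck := divD ck0.
split=> [i|y /spb[d dS ->]]; first exact: bS.
rewrite (bigD1_ord k) //= in sum0.
have bkE : b k = - ((c k)^-1 * \sum_(i < m) c (lift k i) * b (lift k i)).
  apply: (mulrI uck); rewrite mulrN mulrA mulrV // mul1r.
  by apply/eqP; rewrite -addr_eq0 sum0.
exists (fun i => d (lift k i) - d k * (c k)^-1 * c (lift k i)).
  by move=> i; rewrite rpredB ?rpredM ?rpredV.
rewrite (bigD1_ord k) //= bkE mulrN mulr_sumr mulr_sumr -sumrN -big_split /=.
by apply: eq_bigr => i _; rewrite mulrBl addrC !mulrA.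
Qed.

Lemma exists_cbasis :
  divsub_findim S -> exists m (b : 'I_m -> D), cspanning S b /\ cfree S b.
Proof.
move=> [B [BS spB]].
have : exists b : 'I_(size B) -> D, cspanning S b.
  exists (fun i => B`_i); split=> [i|y /spB[c [cS ->]]]; first by apply/BS/mem_nth.
  by exists c => // i; apply/dcenterP.
elim: (size B) => [|m IHm] [b spb]; first by exists 0%N, b; split=> // c _ _ [].
have [freeb|] := pselect (cfree S b); first by exists m.+1, b.
move=> /existsNP[c /not_implyP[cS /not_implyP[sum0 /existsNP[k /eqP ck0]]]].
by apply: IHm; exists (fun i => b (lift k i)); apply: cspanning_drop sum0 ck0.
Qed.

End CenterBasis.

Section LeftRegularMatrix.
Variables (D : unitRingType) (S : seq D) (m : nat) (b : 'I_m -> D).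
Hypotheses (spb : cspanning S b) (freeb : cfree S b).

Definition coords (y : D) : 'I_m -> D :=
  if pselect (exists2 c : 'I_m -> D,
                (forall i, c i \in dcenter S) & y = \sum_i c i * b i)
  is left yb then s2val (cid2 yb) else fun=> 0.

Lemma coordsP y : divsub S y ->
  (forall i, coords y i \in dcenter S) /\ y = \sum_i coords y i * b i.
Proof.
move=> /spb.2 yb; rewrite /coords; case: pselect => // yb'.
by case: (cid2 yb').
Qed.

Lemma coords_uniq y c : divsub S y -> (forall i, c i \in dcenter S) ->
  y = \sum_i c i * b i -> coords y =1 c.
Proof.
move=> yS cS yE; have [dS dE] := coordsP yS.
move=> i; apply/subr0_eq; move: i.
apply: freeb => [i|]; first by rewrite rpredB.
by under eq_bigr do rewrite mulrBl; rewrite sumrB -dE -yE subrr.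
Qed.

Definition to_dcenter (y : D) : dcenter_elt S := insubd 0 y.

Lemma to_dcenterK y : y \in dcenter S -> val (to_dcenter y) = y.
Proof. exact: insubdK. Qed.

Definition lmx (a : D) : 'M[dcenter_elt S]_m :=
  \matrix_(i, j) to_dcenter (coords (a * b j) i).

Lemma divsub_mulb a j : divsub S a -> divsub S (a * b j).
Proof. by move=> aS; apply: divsub_mul aS (spb.1 j). Qed.

Lemma lmxE a i j : divsub S a -> val (lmx a i j) = coords (a * b j) i.
Proof.
by move=> aS; rewrite mxE to_dcenterK //; apply: (coordsP (divsub_mulb j aS)).1.
Qed.

Lemma lmxM a1 a2 : divsub S a1 -> divsub S a2 -> lmx (a1 * a2) = lmx a1 *m lmx a2.
Proof.
move=> a1S a2S; apply/matrixP => i j; apply: val_inj.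
rewrite lmxE; last exact: divsub_mul.
rewrite mxE rmorph_sum /=.
under eq_bigr do rewrite !lmxE //.
move: i; apply: coords_uniq => [||].
- by rewrite -mulrA; apply: divsub_mul => //; apply: divsub_mulb.
- move=> i; apply: rpred_sum => k _.
  by rewrite rpredM ?(coordsP (divsub_mulb _ _)).1.
have [eS eE] := coordsP (divsub_mulb j a2S).
have eC k y : divsub S y -> coords (a2 * b j) k * y = y * coords (a2 * b j) k.
  by have /dcenterP[_] := eS k; apply.
rewrite -mulrA {1}eE mulr_sumr.
under eq_bigr => k _.
  have [fS fE] := coordsP (divsub_mulb k a1S).
  rewrite mulrA -eC // -mulrA {1}fE mulr_sumr.
  over.
rewrite exchange_big /=; apply: eq_bigr => i _; rewrite mulr_suml.
apply: eq_bigr => k _; rewrite mulrA; congr (_ * _).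
by apply: eC; have /dcenterP[] := (coordsP (divsub_mulb k a1S)).1 i.
Qed.

Lemma lmx_dcenter x : x \in dcenter S -> lmx x = (to_dcenter x)%:M.
Proof.
move=> xC; have /dcenterP[xS _] := xC.
apply/matrixP => i j; apply: val_inj.
rewrite lmxE // mxE rmorphMn /= to_dcenterK //.
move: i; apply: coords_uniq => [|i|]; first exact: divsub_mulb.
  by rewrite rpredMn.
rewrite (bigD1 j) //= eqxx mulr1n big1 ?addr0 // => i /negbTE.
by rewrite eq_sym => ->; rewrite mulr0n mul0r.
Qed.

Lemma lmx1 : lmx 1 = 1%:M.
Proof.
rewrite lmx_dcenter ?rpred1 //; congr _%:M.
by apply: val_inj; rewrite to_dcenterK ?rpred1.
Qed.

Lemma det_lmxV a : divsub S a -> a \is a GRing.unit ->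
  \det (lmx a) * \det (lmx a^-1) = 1.
Proof.
move=> aS ua; rewrite -det_mulmx -lmxM ?mulrV ?lmx1 ?det1 //.
exact: divsub_inv.
Qed.

Lemma det_lmx_dcenter x : x \in dcenter S -> val (\det (lmx x)) = x ^+ m.
Proof. by move=> xC; rewrite lmx_dcenter // det_scalar rmorphXn /= to_dcenterK. Qed.

Lemma cspanning_size_gt0 : (0 < m)%N.
Proof.
case: m b spb => // b' [_ /(_ 1 (divsub_one S))[c _]].
by rewrite big_ord0 => /eqP; rewrite oner_eq0.
Qed.

End LeftRegularMatrix.

Section DivisionRing.
Variable D : unitRingType.
Hypothesis divD : is_division_ring D.

Lemma comm_conj_central (x : D) :
  (forall y, y != 0 -> GRing.comm x (y * x / y)) -> forall b, GRing.comm x b.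
Proof.
move=> xconj b; have [->|nz_b] := eqVneq b 0; first exact: commr0.
have [b1_0|nz_b1] := eqVneq (1 + b) 0.
  suff -> : b = -1 by apply: commrN1.
  by apply/eqP; rewrite -addr_eq0 addrC b1_0.
set w := b * x / b; set u := (1 + b) * x / (1 + b).
have [xw xu] : GRing.comm x w /\ GRing.comm x u by split; apply: xconj.
have wbE : w * b = b * x by rewrite divrK ?divD.
have ubE : u * (1 + b) = (1 + b) * x by rewrite divrK ?divD.
have wuE : (w - u) * b = u - x.
  apply/eqP; rewrite mulrBl subr_eq addrAC eq_sym subr_eq wbE.
  by move: ubE; rewrite mulrDr mulrDl mulr1 mul1r => ->; rewrite addrC.
have wu_comm : (w - u) * (x * b - b * x) = 0.
  have wux : (w - u) * x = x * (w - u) by rewrite mulrBl mulrBr xw xu.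
  by rewrite mulrBr mulrA wux -mulrA wuE mulrA wuE mulrBr mulrBl xu subrr.
have [/eqP|nz_wu] := eqVneq (w - u) 0.
  rewrite subr_eq0 => /eqP wu; move: wuE; rewrite wu subrr mul0r => /esym/subr0_eq ux.
  by rewrite /GRing.comm -wbE wu ux.
apply/eqP; rewrite -subr_eq0; apply/eqP.
by rewrite -(mulKr (divD nz_wu) (x * b - b * x)) wu_comm mulr0.
Qed.

Lemma derived_unit (a : D) : derived a -> a \is a GRing.unit.
Proof.
elim=> [x y x0 y0 | a1 a2 _ u1 _ u2 | a1 _ u1]; last by rewrite unitrV.
  by rewrite !unitrMr ?unitrV ?divD.
by rewrite unitrMr.
Qed.

Lemma centralizes_derived_central (x : D) : derived x ->
  (forall y, derived y -> GRing.comm x y) -> forall b, GRing.comm x b.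
Proof.
move=> xD xC; apply: comm_conj_central => y y0.
have x0 : x != 0 by apply: contraTneq (derived_unit xD) => ->; rewrite unitr0.
by rewrite -(divrK (derived_unit xD) (y * x / y)) /GRing.comm mulrA xC //; constructor.
Qed.

Lemma derived_det_lmx (a : D) : derived a ->
  exists S0 : seq D, forall S, {subset S0 <= S} -> divsub S a /\
    forall m (b : 'I_m -> D), cspanning S b -> cfree S b -> \det (lmx S b a) = 1.
Proof.
elim=> [x y x0 y0 | a1 a2 _ [S1 IH1] _ [S2 IH2] | a1 a1D [S1 IH1]].
- exists [:: x; y] => S sub.
  have xS : divsub S x by apply/divsub_mem/sub; rewrite !inE eqxx.
  have yS : divsub S y by apply/divsub_mem/sub; rewrite !inE eqxx orbT.
  split=> [|m b spb freeb]; first by do ?[apply: divsub_mul | apply: divsub_inv].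
  rewrite !lmxM //; try by do ?[apply: divsub_mul | apply: divsub_inv].
  rewrite !det_mulmx -mulrA mulrACA.
  by rewrite !det_lmxV ?divD ?mulr1.
- exists (S1 ++ S2) => S sub.
  have sub1 : {subset S1 <= S} by move=> z z1; apply: sub; rewrite mem_cat z1.
  have sub2 : {subset S2 <= S} by move=> z z2; apply: sub; rewrite mem_cat z2 orbT.
  have [[a1S d1] [a2S d2]] := (IH1 S sub1, IH2 S sub2).
  split=> [|m b spb freeb]; first exact: divsub_mul.
  by rewrite lmxM // det_mulmx d1 // d2 // mulr1.
- exists S1 => S sub; have [a1S d1] := IH1 S sub.
  split=> [|m b spb freeb]; first exact: divsub_inv.
  have := det_lmxV spb freeb a1S (derived_unit a1D).
  by rewrite d1 // mul1r.
Qed.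

End DivisionRing.

Theorem lemma6p2 (D : unitRingType) :
  is_division_ring D -> weakly_locally_finite D ->
  forall x : D, derived_center x -> exists n : nat, (0 < n)%N /\ x ^+ n = 1.
Proof.
move=> divD wlfD x [xD xC].
have [S0 /(_ S0 (fun _ => id))[xS0 detx]] := derived_det_lmx divD xD.
have x_dcenter : x \in dcenter S0.
  by apply/dcenterP; split=> // y _; apply: centralizes_derived_central.
have [m [b [spb freeb]]] := exists_cbasis divD (wlfD S0).
exists m; split; first exact: cspanning_size_gt0 spb.
by rewrite -(det_lmx_dcenter spb freeb x_dcenter) detx.
Qed.
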